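(* Let $n\ge1$ and let $\mathfrak{c}=\{c_{ij}\}_{1\le i<j\le n}$, $\mathfrak{\ell}=\{\ell_1,\dots,\ell_n\}$ be integers, with associated Grossberg–Karshon twisted cube $(C(\mathfrak{c},\mathfrak{\ell}),\rho)$ and divisor $D(\mathfrak{c},\mathfrak{\ell})$ on $X(\mathfrak{c})$. (a) If the twisted cube is untwisted, then $C(\mathfrak{c},\mathfrak{\ell})$ is convex and $\ell_k\ge0$ for all $k$. Equivalently, if $D(\mathfrak{c},\mathfrak{\ell})$ is basepoint-free, then it is also effective. (b) If $C(\mathfrak{c},\mathfrak{\ell})$ is convex and $\ell_k>0$ for all $k$, then the twisted cube is untwisted (equivalently, $D(\mathfrak{c},\mathfrak{\ell})$ is basepoint-free).
   Context: Functions on $\mathbb{R}^n$: $A_n(x)=\ell_n$, $A_j(x)=\ell_j-\sum_{k=j+1}^nc_{jk}x_k$ for $1\le j\le n-1$. $C(\mathfrak{c},\mathfrak{\ell})=\{x\in\mathbb{R}^n:$ for each $1\le k\le n$, $A_k(x)<x_k<0$ or $0\le x_k\le A_k(x)\}$; $\rho(x)=(-1)^n\prod_k\mathrm{sgn}(x_k)$ on $C(\mathfrak{c},\mathfrak{\ell})$ and $0$ elsewhere, where $\mathrm{sgn}(t)=1$ for $t<0$ and $-1$ for $t\ge0$. The twisted cube is untwisted if $C(\mathfrak{c},\mathfrak{\ell})$ is closed in $\mathbb{R}^n$ (equivalently, $C(\mathfrak{c},\mathfrak{\ell})=\{x:0\le x_j\le A_j(x)\ \forall j\}$). Toric data: $e_j^+$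 standard basis of $\mathbb{R}^n$, $e_j^-:=-e_j^+-\sum_{k>j}c_{jk}e_k^+$; $\Sigma_{\mathfrak{c}}$ is the complete smooth fan whose cones are generated by subsets of $\{e_1^\pm,\dots,e_n^\pm\}$ not containing any $\{e_j^+,e_j^-\}$; $X(\mathfrak{c})$ is its toric variety; $D(\mathfrak{c},\mathfrak{\ell})=\sum_{j=1}^n\ell_jD_{e_j^-}$ where $D_{e_j^-}$ is the torus-invariant prime divisor of the ray through $e_j^-$. *)

From HB Require Import structures.
From mathcomp Require Import all_boot all_order all_algebra.
From mathcomp Require Import all_classical all_reals topology normedtype.
Set Implicit Arguments. Unset Strict Implicit. Unset Printing Implicit Defensive.
Import Order.TTheory GRing.Theory Num.Theory.
Import numFieldNormedType.Exports.
Local Open Scope classical_set_scope.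
Local Open Scope ring_scope.

(* Points of R^n are row vectors 'rV[R]_n; coordinate j (0-based, the
   paper's j+1) of x is x ord0 j.  The integer data c_{jk} (only j < k is
   used) and l_j are functions on 'I_n. *)

Definition Afun (R : realType) (n : nat) (c : 'I_n -> 'I_n -> int)
  (l : 'I_n -> int) (x : 'rV[R]_n) (j : 'I_n) : R :=
  (l j)%:~R - \sum_(k < n | (j < k)%N) (c j k)%:~R * x ord0 k.

Definition twisted_cube (R : realType) (n : nat) (c : 'I_n -> 'I_n -> int)
  (l : 'I_n -> int) : set 'rV[R]_n :=
  [set x | forall k : 'I_n,
      (Afun c l x k < x ord0 k /\ x ord0 k < 0) \/
      (0 <= x ord0 k /\ x ord0 k <= Afun c l x k)].

(* The density function rho (not needed for the statement, given for completeness). *)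
Definition sgn (R : realType) (t : R) : R := if t < 0 then 1 else -1.
Definition rho (R : realType) (n : nat) (c : 'I_n -> 'I_n -> int)
  (l : 'I_n -> int) (x : 'rV[R]_n) : R :=
  if `[< twisted_cube c l x >] then (-1) ^+ n * \prod_(k < n) sgn (x ord0 k)
  else 0.

Definition untwisted (R : realType) (n : nat) (c : 'I_n -> 'I_n -> int)
  (l : 'I_n -> int) : Prop := closed (twisted_cube (R:=R) c l).

Definition convex_set (R : realType) (n : nat) (A : set 'rV[R]_n) : Prop :=
  forall x y, A x -> A y -> forall t : R, 0 <= t -> t <= 1 ->
    A (t *: x + (1 - t) *: y).

From HB Require Import structures.
From mathcomp Require Import all_boot all_order all_algebra.
From mathcomp Require Import all_classical all_reals topology normedtype.
From mathcomp Require Import ring lra zify.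
Import Order.TTheory GRing.Theory Num.Theory.
Import numFieldNormedType.Exports.
Local Open Scope classical_set_scope.
Local Open Scope ring_scope.

(* Both parts reduce to the statement that C lies in the nonnegative orthant,
   since then C is the polytope {0 <= x_k <= A_k(x)}, which is closed and
   convex.  A point x of C with x_k < 0 is pushed, keeping the coordinates
   after k and refilling those before k by x_j = A_j(x)/2 (which always lies
   in the j-th fibre), to the point with x_k = 0; that point leaves C because
   A_k(x) < 0, so C is not closed.  If all l_k > 0 then 0 is in C, and the
   segment from x to 0 crosses A_k = 0 while x_k is still negative, so C is
   not convex.  Finally, if C lies in the orthant and l_j >= 0 for j > k,
   then l_k < 0 would put the completion of x_k = l_k/2, x_j = 0 (j > k) in C. *)

Lemma half_in_fibre (R : realFieldType) (B : R) :
  (B < B / 2 /\ B / 2 < 0) \/ (0 <= B / 2 /\ B / 2 <= B).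
Proof. by case: (ltP B 0) => hB; [left|right]; split; lra. Qed.

Lemma closed_segment_end (R : realType) (V : normedModType R) (S : set V)
    (u w : V) :
  closed S -> (forall s : R, 0 < s -> s <= 1 -> S (s *: w + (1 - s) *: u)) ->
  S u.
Proof.
move=> clS segS; pose f s := s *: w + (1 - s) *: u.
have f0 : f 0 = u by rewrite /f scale0r add0r subr0 scale1r.
have f_cont : {for 0, continuous f}.
  apply: continuousD; apply: continuousZr_tmp; first exact: cvg_id.
  by apply: cvgB; [exact: cvg_cst | exact: cvg_id].
apply: (@closed_cvg _ _ (0 : R)^'+ _ f S clS _ u).
  near=> s; apply: segS; first by near: s; exact: nbhs_right_gt.
  by apply: ltW; near: s; apply: nbhs_right_lt; exact: ltr01.
by rewrite -f0; apply: cvg_at_right_filter.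
Unshelve. all: by end_near.
Qed.

Definition nonneg_orthant (R : realType) (n : nat) : set 'rV[R]_n :=
  [set x : 'rV[R]_n | forall k, 0 <= x ord0 k].

Definition row_set {R : Type} {n : nat} (x : 'rV[R]_n) (k : 'I_n) (t : R) :=
  \row_j (if j == k then t else x ord0 j).

Lemma row_setE {R : Type} {n : nat} (x : 'rV[R]_n) k t j :
  row_set x k t ord0 j = if j == k then t else x ord0 j.
Proof. by rewrite mxE. Qed.

Lemma row_set_above {R : Type} {n : nat} (x : 'rV[R]_n) (k j : 'I_n) t :
  (k < j)%N -> row_set x k t ord0 j = x ord0 j.
Proof. by rewrite row_setE; case: eqP => // -> ; rewrite ltnn. Qed.

Section TwistedCube.
Context {R : realType} {n : nat} {c : 'I_n -> 'I_n -> int} {l : 'I_n -> int}.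
Local Notation C := (twisted_cube (R:=R) c l).
Local Notation A := (Afun c l).

Lemma Afun_tail {x y : 'rV[R]_n} {j : 'I_n} :
  (forall i : 'I_n, (j < i)%N -> x ord0 i = y ord0 i) -> A x j = A y j.
Proof. by move=> xy; rewrite /Afun; congr (_ - _); apply: eq_bigr => i /xy ->. Qed.

Lemma Afun_tail0 (x : 'rV[R]_n) (j : 'I_n) :
  (forall i : 'I_n, (j < i)%N -> x ord0 i = 0) -> A x j = (l j)%:~R.
Proof. by move=> x0; rewrite /Afun big1 ?subr0 // => i /x0 ->; rewrite mulr0. Qed.

Lemma Afun_lerp (x y : 'rV[R]_n) (t : R) (j : 'I_n) :
  A (t *: x + (1 - t) *: y) j = t * A x j + (1 - t) * A y j.
Proof.
rewrite /Afun.
have -> : \sum_(k < n | (j < k)%N) (c j k)%:~R * (t *: x + (1 - t) *: y) ord0 k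
    = t * (\sum_(k < n | (j < k)%N) (c j k)%:~R * x ord0 k)
      + (1 - t) * (\sum_(k < n | (j < k)%N) (c j k)%:~R * y ord0 k).
  by rewrite 2!mulr_sumr -big_split; apply: eq_bigr => i _; rewrite !mxE /=; ring.
ring.
Qed.

Lemma Afun_continuous (k : 'I_n) : continuous (fun x : 'rV[R]_n => A x k).
Proof.
move=> x; apply: continuousB; first exact: cst_continuous.
apply: (continuous_big add_continuous) => i _ y.
by apply: continuousM; [exact: cst_continuous | exact: coord_continuous].
Qed.

(* Built from the top coordinate down: A_j(z) only involves the z_i with i > j. *)
Lemma exists_half_completion (m : nat) (x : 'rV[R]_n) :
  exists z : 'rV[R]_n,
    (forall j : 'I_n, (m <= j)%N -> z ord0 j = x ord0 j) /\
    (forall j : 'I_n, (j < m)%N -> z ord0 j = A z j / 2).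
Proof.
elim: m x => [|m IH] x; first by exists x.
have [hm|hm] := ltnP m n; last first.
  have [z [zx zA]] := IH x; exists z; split => [j hj|j _].
    exact/zx/ltnW.
  exact/zA/(leq_trans (ltn_ord j) hm).
pose k := Ordinal hm.
have [z [zx zA]] := IH (row_set x k (A x k / 2)).
have z_above (j : 'I_n) : (k < j)%N -> z ord0 j = x ord0 j.
  by move=> kj; rewrite zx; [exact: row_set_above | exact: ltnW].
exists z; split => [j hj|j]; first by rewrite z_above.
rewrite ltnS leq_eqVlt => /orP [/eqP jm|]; last exact: zA.
have -> : j = k by apply: val_inj.
by rewrite zx // row_setE eqxx (Afun_tail z_above).
Qed.

Definition untwisted_cube : set 'rV[R]_n :=
  [set x : 'rV[R]_n | forall k, 0 <= x ord0 k /\ x ord0 k <= A x k].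

Lemma twisted_cube_untwisted : C `<=` nonneg_orthant R n -> C = untwisted_cube.
Proof.
move=> Cge0; apply/seteqP; split => x Cx k; last by right.
by have := Cge0 x Cx k; case: (Cx k) => [[_ ?] ?|//]; lra.
Qed.

Lemma untwisted_cube_convex : convex_set untwisted_cube.
Proof.
move=> x y Ux Uy t t0 t1 k; rewrite Afun_lerp !mxE.
have [x0 xA] := Ux k; have [y0 yA] := Uy k.
have t1' : 0 <= 1 - t by lra.
by split; [rewrite addr_ge0 ?mulr_ge0 | rewrite lerD ?ler_wpM2l].
Qed.

Lemma untwisted_cube_closed : closed untwisted_cube.
Proof.
have -> : untwisted_cube = \bigcap_(k in [set: 'I_n])
    ((fun x : 'rV[R]_n => x ord0 k) @^-1` [set y | 0 <= y] `&`
     (fun x : 'rV[R]_n => A x k - x ord0 k) @^-1` [set y | 0 <= y]).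
  apply/seteqP; split => x /= Ux k.
    by move=> _; have [? ?] := Ux k; split => //=; rewrite subr_ge0.
  by have [? /=] := Ux k Logic.I; rewrite subr_ge0.
apply: closed_bigI => k _; apply: closedI; apply: preimage_closed; do ?exact: closed_ge.
  by move=> y _; exact: coord_continuous.
move=> y _; apply: (@continuousB _ _ _ (fun x => A x k) (fun x => x ord0 k)).
  exact: Afun_continuous.
exact: coord_continuous.
Qed.

Lemma twisted_cube_segment_out {x : 'rV[R]_n} {k : 'I_n} :
  C x -> x ord0 k < 0 -> exists u w : 'rV[R]_n,
    ~ C u /\ forall s : R, 0 < s -> s <= 1 -> C (s *: w + (1 - s) *: u).
Proof.
move=> Cx xk.
have [[Axk _]|[xk_ge0 _]] := Cx k; last by rewrite leNgt xk in xk_ge0.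
have [u [ux uA]] := exists_half_completion k (row_set x k 0).
have [w [wx wA]] := exists_half_completion k x.
have u_above (j : 'I_n) : (k < j)%N -> u ord0 j = x ord0 j.
  by move=> kj; rewrite ux; [exact: row_set_above | exact: ltnW].
have uk : u ord0 k = 0 by rewrite ux // row_setE eqxx.
exists u, w; split.
  move=> /(_ k); rewrite uk (Afun_tail u_above) ltxx => -[[] //|[_]].
  by rewrite leNgt (lt_trans Axk xk).
move=> s s0 s1; set f := s *: w + (1 - s) *: u.
have fE (j : 'I_n) : f ord0 j = s * w ord0 j + (1 - s) * u ord0 j by rewrite !mxE.
have f_above (j : 'I_n) : (k < j)%N -> f ord0 j = x ord0 j.
  by move=> kj; rewrite fE u_above // wx; [ring | exact: ltnW].
move=> j; have [jk|kj|/val_inj->] := ltngtP j k.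
- rewrite fE Afun_lerp uA // wA //.
  have -> : s * (A w j / 2) + (1 - s) * (A u j / 2)
            = (s * A w j + (1 - s) * A u j) / 2 by ring.
  exact: half_in_fibre.
- rewrite f_above // (@Afun_tail f x j); first exact: Cx.
  by move=> i ji; apply/f_above/(ltn_trans kj).
- rewrite (Afun_tail f_above) fE uk wx // mulr0 addr0; left.
  split; last by rewrite pmulr_rlt0.
  by apply: (lt_le_trans Axk); rewrite ler_nMl // ltW.
Qed.

Lemma closed_twisted_cube_nonneg : closed C -> C `<=` nonneg_orthant R n.
Proof.
move=> clC x Cx k; rewrite leNgt; apply/negP => xk.
have [u [w [Cu Cseg]]] := twisted_cube_segment_out Cx xk.
exact/Cu/(@closed_segment_end R _ _ u w clC Cseg).
Qed.

Lemma twisted_cube0 : (forall k, 0 <= l k) -> C 0.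
Proof.
by move=> l_ge0 k; right; rewrite mxE Afun_tail0 ?ler0z // => i _; rewrite mxE.
Qed.

Lemma convex_twisted_cube_nonneg :
  convex_set C -> (forall k, 0 < l k) -> C `<=` nonneg_orthant R n.
Proof.
move=> cvC l_gt0 x Cx k; rewrite leNgt; apply/negP => xk.
have [[Axk _]|[xk_ge0 _]] := Cx k; last by rewrite leNgt xk in xk_ge0.
have lk : 0 < ((l k)%:~R : R) by rewrite ltr0z.
have d_gt0 : 0 < (l k)%:~R - A x k by rewrite subr_gt0 (lt_trans Axk (lt_trans xk lk)).
pose s := (l k)%:~R / ((l k)%:~R - A x k).
have s_gt0 : 0 < s by rewrite divr_gt0.
have s_le1 : s <= 1 by rewrite ler_pdivrMr // mul1r lerDl oppr_ge0 ltW // (lt_trans Axk xk).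
have on_hyperplane : s * A x k + (1 - s) * (l k)%:~R = 0.
  by rewrite /s; field; rewrite gt_eqF.
have := cvC x 0 Cx (twisted_cube0 (fun j => ltW (l_gt0 j))) s (ltW s_gt0) s_le1 k.
rewrite Afun_lerp (@Afun_tail0 0) => [|i _]; last by rewrite mxE.
have sxk : s * x ord0 k < 0 by rewrite pmulr_rlt0.
rewrite on_hyperplane !mxE mulr0 addr0 => -[[sx_gt0 _]|[sx_ge0 _]].
  by have := lt_trans sx_gt0 sxk; rewrite ltxx.
by have := le_lt_trans sx_ge0 sxk; rewrite ltxx.
Qed.

Lemma nonneg_twisted_cube_l_ge0 : C `<=` nonneg_orthant R n -> forall k, 0 <= l k.
Proof.
move=> Cge0.
suff l_ge0_above m (k : 'I_n) : (n <= k + m)%N -> 0 <= l k.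
  by move=> k; apply: (l_ge0_above n); rewrite leq_addl.
elim: m k => [|m IH] k km; first by rewrite addn0 leqNgt ltn_ord in km.
rewrite leNgt; apply/negP => lk.
have lk2 : (l k)%:~R / 2 < 0 :> R by rewrite ltr_pdivrMr // mul0r ltrz0.
have [z [zx zA]] := exists_half_completion k (row_set 0 k ((l k)%:~R / 2)).
have z_above (j : 'I_n) : (k < j)%N -> z ord0 j = 0.
  by move=> kj; rewrite zx; [rewrite row_set_above // mxE | exact: ltnW].
have zk : z ord0 k = (l k)%:~R / 2 by rewrite zx // row_setE eqxx.
suff /Cge0/(_ k) : C z by rewrite zk leNgt lk2.
move=> j; have [jk|kj|/val_inj->] := ltngtP j k.
- by rewrite zA //; apply: half_in_fibre.
- rewrite z_above // Afun_tail0 => [|i ji]; last exact/z_above/(ltn_trans kj).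
  by right; split => //; rewrite ler0z; apply: IH; lia.
- by rewrite Afun_tail0 // zk; left; split => //; lra.
Qed.
End TwistedCube.

Theorem theorem3p2 (R : realType) (n : nat) (c : 'I_n -> 'I_n -> int)
  (l : 'I_n -> int) (hn : (1 <= n)%N) :
  (untwisted R c l ->
     convex_set (twisted_cube (R:=R) c l) /\ (forall k : 'I_n, 0 <= l k)) /\
  (convex_set (twisted_cube (R:=R) c l) -> (forall k : 'I_n, 0 < l k) ->
     untwisted R c l).
Proof.
split=> [clC | cvC l_gt0].
  have Cge0 := closed_twisted_cube_nonneg clC.
  split; last exact: nonneg_twisted_cube_l_ge0 Cge0.
  by rewrite (twisted_cube_untwisted Cge0); exact: untwisted_cube_convex.
have Cge0 := convex_twisted_cube_nonneg cvC l_gt0.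
by rewrite /untwisted (twisted_cube_untwisted Cge0); exact: untwisted_cube_closed.
Qed.
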